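(* Let $M\ge 2$ and let $\mathcal{P}$ be a Class I source set on $\{1,\dots,M\}$, i.e. a nonempty set of probability distributions on $\{1,\dots,M\}$ whose convex hull contains the uniform distribution $(1/M,\dots,1/M)$. Then for every $D\in(0,1]$, \[ \epsilon^*_{\mathrm{DP}}(\mathcal{P},D)=\begin{cases}\log\left((M-1)\frac{1-D}{D}\right), & 0<D<\frac{M-1}{M},\\[2pt] 0, & \frac{M-1}{M}\le D\le 1.\end{cases} \]
   Context: A mechanism is an $M\times M$ row-stochastic matrix $Q$ with entries $Q(j|i)$ = probability of releasing $j$ when the input is $i$, $i,j\in\{1,\dots,M\}$. Its diagonal distortions are $D_i=1-Q(i|i)$. Distortion is Hamming distortion, so the average distortion under a source distribution $P=(P_1,\dots,P_M)$ is $\sum_{i=1}^M P_iD_i$. A mechanism $Q$ is $(\mathcal{P},D)$-valid if $\sum_{i=1}^M P_iD_i\le D$ for every $P\in\mathcal{P}$; $\mathcal{Q}(\mathcal{P},D)$ denotes the set of all such mechanisms. The differential privacy leakage of $Q$ is $\epsilon_{\mathrm{DP}}(Q)=\min\{\epsilon\ge 0: Q(\hat x|x_1)\le e^{\epsilon}Q(\hat x|x_2)\text{ for all }x_1,x_2,\hat x\in\{1,\dots,M\}\}$ (equal to $+\infty$ if no finite $\epsilon$ works; all-zero columns are allowed). For $0<D\le 1$, $\epsilon^*_{\mathrm{DP}}(\mathcal{P},D)=\min_{Q\in\mathcal{Q}(\mathcal{P},D)}\epsilon_{\mathrm{DP}}(Q)$. Logarithms are natural. *)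

From mathcomp Require Import all_boot all_order all_algebra.
From mathcomp Require Import all_classical all_reals all_analysis.
Set Implicit Arguments. Unset Strict Implicit. Unset Printing Implicit Defensive.
Import Order.TTheory GRing.Theory Num.Theory.
Local Open Scope classical_set_scope.
Local Open Scope ring_scope.

(* Alphabet {1,...,M} is represented by 'I_M = {0,...,M-1}.
   A mechanism Q : 'I_M -> 'I_M -> R, with Q i j = Q(j|i). *)
Definition is_mechanism (R : realType) (M : nat) (Q : 'I_M -> 'I_M -> R) : Prop :=
  (forall i j, 0 <= Q i j) /\ (forall i, \sum_(j < M) Q i j = 1).

(* Diagonal (Hamming) distortion D_i = 1 - Q(i|i). *)
Definition distortion (R : realType) (M : nat) (Q : 'I_M -> 'I_M -> R) (i : 'I_M) : R :=
  1 - Q i i.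

Definition is_prob_dist (R : realType) (M : nat) (P : 'I_M -> R) : Prop :=
  (forall i, 0 <= P i) /\ \sum_(i < M) P i = 1.

Definition valid_mech (R : realType) (M : nat) (Ps : set ('I_M -> R)) (D : R)
  (Q : 'I_M -> 'I_M -> R) : Prop :=
  is_mechanism Q /\
  (forall P, Ps P -> \sum_(i < M) P i * distortion Q i <= D).

Definition classI (R : realType) (M : nat) (Ps : set ('I_M -> R)) : Prop :=
  (exists P, Ps P) /\
  (forall P, Ps P -> is_prob_dist P) /\
  (exists (n : nat) (w : 'I_n -> R) (Pk : 'I_n -> 'I_M -> R),
      (forall k, 0 <= w k) /\ \sum_(k < n) w k = 1 /\
      (forall k, Ps (Pk k)) /\
      (forall i, \sum_(k < n) w k * Pk k i = 1 / M%:R)).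

Definition is_DP (R : realType) (M : nat) (Q : 'I_M -> 'I_M -> R) (e : R) : Prop :=
  forall x1 x2 xh, Q x1 xh <= expR e * Q x2 xh.

(* eps_DP(Q) = min {eps >= 0 : Q is eps-DP}, +oo if the set is empty
   (expressed as an infimum in the extended reals). *)
Definition eps_DP (R : realType) (M : nat) (Q : 'I_M -> 'I_M -> R) : \bar R :=
  ereal_inf [set e%:E | e in [set e : R | 0 <= e /\ is_DP Q e]].

Definition eps_DP_star (R : realType) (M : nat) (Ps : set ('I_M -> R)) (D : R) : \bar R :=
  ereal_inf [set eps_DP Q | Q in [set Q | valid_mech Ps D Q]].

Definition eps_star_formula (R : realType) (M : nat) (D : R) : \bar R :=
  if D < (M%:R - 1) / M%:R then (ln ((M%:R - 1) * ((1 - D) / D)))%:E else 0%E.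

From mathcomp Require Import all_boot all_order all_algebra.
From mathcomp Require Import all_classical all_reals all_analysis.
From mathcomp Require Import ring lra.
Set Implicit Arguments. Unset Strict Implicit. Unset Printing Implicit Defensive.
Import Order.TTheory GRing.Theory Num.Theory.
Local Open Scope classical_set_scope.
Local Open Scope ring_scope.

(* Averaging the distortion constraint over the mixture of sources that equals
   the uniform law shows that any valid mechanism has trace
   S = sum_i Q(i|i) >= M (1 - D).  Conversely, if Q is eps-DP then
   x Q(j|i) >= Q(i|i) for all i, j; summing over i gives
   x - S >= (x - 1) Q(j|j) with x = e^eps, and summing over j gives
   (M + x - 1) S <= M x.  Together, (M - 1)(1 - D) <= x D.  The bound is
   attained by the symmetric mechanism with diagonal max(1 - D, 1/M) and
   constant off-diagonal entries. *)

Lemma sum_if_eq_const (R : comNzRingType) (M : nat) (i : 'I_M) (a b : R) :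
  \sum_(j < M) (if i == j then a else b) = a + (M%:R - 1) * b.
Proof.
rewrite (bigD1 i) //= eqxx.
rewrite (eq_bigr (fun _ => b)); last by move=> j /negbTE; rewrite eq_sym => ->.
rewrite sumr_const cardC1 card_ord.
case: M i => [[]//|n i] /=.
by rewrite -mulr_natl -[n.+1]addn1 natrD; congr (_ + _); ring.
Qed.

Lemma valid_mech_trace_ge (R : realType) (M : nat) (Ps : set ('I_M -> R))
    (D : R) (Q : 'I_M -> 'I_M -> R) :
  (0 < M)%N -> classI Ps -> valid_mech Ps D Q ->
  M%:R * (1 - D) <= \sum_(i < M) Q i i.
Proof.
move=> M0 [_ [_ [n [w [Pk [w0 [w1 [PkP Pku]]]]]]]] [_ QV].
have M0R : 0 < M%:R :> R by rewrite ltr0n.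
have mix_le : \sum_(k < n) w k * (\sum_(i < M) Pk k i * distortion Q i) <= D.
  apply: le_trans (_ : \sum_(k < n) w k * D <= D).
    by apply: ler_sum => k _; apply: ler_wpM2l => //; apply: QV.
  by rewrite -big_distrl /= w1 mul1r.
have mix_eq : \sum_(k < n) w k * (\sum_(i < M) Pk k i * distortion Q i)
            = (M%:R - \sum_(i < M) Q i i) / M%:R.
  under eq_bigr do rewrite big_distrr /=.
  rewrite exchange_big /=.
  under eq_bigr => i _.
    under eq_bigr do rewrite mulrA.
    rewrite -big_distrl /= Pku.
  over.
  by rewrite -big_distrr /= /distortion sumrB sumr_const card_ord mulrC div1r.
rewrite mix_eq ler_pdivrMr // in mix_le.
lra.
Qed.

Lemma DP_trace_le (R : realType) (M : nat) (Q : 'I_M -> 'I_M -> R) (e : R) :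
  is_mechanism Q -> is_DP Q e ->
  (expR e - 1) * \sum_(i < M) Q i i <= M%:R * (expR e - \sum_(i < M) Q i i).
Proof.
move=> [_ Q1] DP; set x := expR e; set S := \sum_(i < M) Q i i.
have row_bound j : (x - 1) * Q j j <= x - S.
  have -> : x - S = \sum_(i < M) (x * Q j i - Q i i).
    by rewrite sumrB -big_distrr /= Q1 mulr1.
  rewrite (bigD1 j) //= -[leLHS]addr0 mulrBl mul1r; apply: lerD => //.
  by apply: sumr_ge0 => i _; rewrite subr_ge0; exact: DP.
have : \sum_(j < M) (x - 1) * Q j j <= \sum_(j < M) (x - S).
  by apply: ler_sum => j _; apply: row_bound.
by rewrite -big_distrr /= -/S sumr_const card_ord mulr_natl.
Qed.

Lemma valid_DP_exp_bound (R : realType) (M : nat) (Ps : set ('I_M -> R))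
    (D : R) (Q : 'I_M -> 'I_M -> R) (e : R) :
  (0 < M)%N -> classI Ps -> valid_mech Ps D Q -> is_DP Q e ->
  (M%:R - 1) * (1 - D) <= expR e * D.
Proof.
move=> M0 hP hV DP.
have M0R : 0 < M%:R :> R by rewrite ltr0n.
have S_ge := valid_mech_trace_ge M0 hP hV.
have S_le := DP_trace_le hV.1 DP.
have M1R : 1 <= M%:R :> R by rewrite ler1n.
have pos : 0 <= M%:R + expR e - 1 by have := expR_gt0 e; lra.
have := ler_wpM2l pos S_ge.
rewrite -(ler_pM2l M0R); nra.
Qed.

Lemma eps_star_formula_le (R : realType) (M : nat) (D e : R) :
  (2 <= M)%N -> 0 < D -> 0 <= e -> (M%:R - 1) * (1 - D) <= expR e * D ->
  (eps_star_formula M D <= e%:E)%E.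
Proof.
move=> M2 D0 e0 hxD; rewrite /eps_star_formula; case: ifP => hD; last by rewrite lee_fin.
rewrite lee_fin.
have MR : (2 : R) <= M%:R by rewrite (ler_nat R 2 M).
have D1 : D < 1 by move: hD; rewrite ltr_pdivlMr; [nra | lra].
have pos : 0 < (M%:R - 1) * ((1 - D) / D).
  by apply: mulr_gt0; [lra | apply: divr_gt0; lra].
by rewrite -(expRK e) ler_ln ?posrE ?expR_gt0 // mulrA ler_pdivrMr.
Qed.

Lemma eps_star_formula_le_eps_DP (R : realType) (M : nat)
    (Ps : set ('I_M -> R)) (D : R) (Q : 'I_M -> 'I_M -> R) :
  (2 <= M)%N -> classI Ps -> 0 < D -> valid_mech Ps D Q ->
  (eps_star_formula M D <= eps_DP Q)%E.
Proof.
move=> M2 hP D0 hV; apply: le_ereal_inf_tmp => _ [e [e0 DP] <-].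
apply: eps_star_formula_le => //.
by apply: (valid_DP_exp_bound _ hP hV DP); apply: leq_trans M2.
Qed.

Definition sym_mech (R : realType) (M : nat) (a : R) : 'I_M -> 'I_M -> R :=
  fun i j => if i == j then a else (1 - a) / (M%:R - 1).
Arguments sym_mech {R} M a.

Lemma sym_mech_is_mechanism (R : realType) (M : nat) (a : R) :
  1 < M%:R :> R -> 0 <= a <= 1 -> is_mechanism (sym_mech M a).
Proof.
move=> M1 /andP[a0 a1]; split=> [i j | i].
  by rewrite /sym_mech; case: eqP => // _; apply: divr_ge0; lra.
rewrite /sym_mech sum_if_eq_const; field.
by rewrite gt_eqF //; lra.
Qed.

Lemma sym_mech_avg_distortion (R : realType) (M : nat) (a : R) (P : 'I_M -> R) :
  is_prob_dist P -> \sum_(i < M) P i * distortion (sym_mech M a) i = 1 - a.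
Proof.
move=> [_ P1]; rewrite /distortion /sym_mech.
under eq_bigr do rewrite eqxx.
by rewrite -big_distrl /= P1 mul1r.
Qed.

Lemma sym_mech_is_DP (R : realType) (M : nat) (a : R) :
  1 < M%:R :> R -> 1 / M%:R <= a < 1 ->
  is_DP (sym_mech M a) (ln (a * (M%:R - 1) / (1 - a))).
Proof.
move=> M1 /andP[aM a1] x1 x2 xh.
have M0 : 0 < M%:R :> R by lra.
have a0 : 0 < a by apply: lt_le_trans aM; rewrite divr_gt0.
have aM' : 1 <= a * M%:R by rewrite -ler_pdivrMr.
set b := (1 - a) / (M%:R - 1).
have b0 : 0 < b by apply: divr_gt0; lra.
have ba : b <= a by rewrite /b ler_pdivrMr; lra.
have ratio : a * (M%:R - 1) / (1 - a) * b = a.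
  by rewrite /b; field; apply/andP; split; rewrite gt_eqF //; lra.
have ratio0 : 0 < a * (M%:R - 1) / (1 - a).
  by apply: divr_gt0; [apply: mulr_gt0|]; lra.
rewrite lnK ?posrE // /sym_mech -/b.
have hi : (if x1 == xh then a else b) <= a by case: ifP.
have lo : b <= (if x2 == xh then a else b) by case: ifP.
by apply: (le_trans hi); rewrite -{1}ratio; apply: ler_wpM2l => //; lra.
Qed.

Lemma exists_optimal_mech (R : realType) (M : nat) (Ps : set ('I_M -> R))
    (D : R) :
  (2 <= M)%N -> classI Ps -> 0 < D -> D <= 1 ->
  exists Q e, valid_mech Ps D Q /\ 0 <= e /\ is_DP Q e /\
    eps_star_formula M D = e%:E.
Proof.
move=> M2 [_ [hprob _]] D0 D1.
have MR : (2 : R) <= M%:R by rewrite (ler_nat R 2 M).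
have M0 : M%:R != 0 :> R by rewrite gt_eqF //; lra.
have M1 : M%:R - 1 != 0 :> R by rewrite gt_eqF //; lra.
have inv_lt1 : 1 / M%:R < 1 :> R by rewrite ltr_pdivrMr; lra.
suff [a [aM a1 aD ->]] : exists a, [/\ 1 / M%:R <= a, a < 1, 1 - a <= D &
    eps_star_formula M D = (ln (a * (M%:R - 1) / (1 - a)))%:E].
  have a0 : 0 <= a by apply: le_trans aM; rewrite divr_ge0 //; lra.
  have aM' : 1 <= a * M%:R by rewrite -ler_pdivrMr //; lra.
  exists (sym_mech M a), (ln (a * (M%:R - 1) / (1 - a))).
  split; [split | split; [|split]] => //.
  - by apply: sym_mech_is_mechanism; [lra | apply/andP; split; lra].
  - by move=> P /hprob /(sym_mech_avg_distortion a) ->.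
  - by apply: ln_ge0; rewrite ler_pdivlMr; lra.
  - by apply: sym_mech_is_DP; [lra | rewrite aM].
have splitM : (M%:R - 1) / M%:R = 1 - 1 / M%:R :> R by field.
rewrite /eps_star_formula splitM; case: ifPn => hD.
- exists (1 - D); split; [lra | lra | lra |].
  by congr (ln _)%:E; field; rewrite subKr gt_eqF.
- exists (1 / M%:R); rewrite -real_leNgt ?num_real // in hD; split=> //.
  suff -> : 1 / M%:R * (M%:R - 1) / (1 - 1 / M%:R) = 1 :> R by rewrite ln1.
  by field; rewrite M0 M1.
Qed.

Theorem theorem1 (R : realType) (M : nat) (Ps : set ('I_M -> R)) (D : R) :
  (2 <= M)%N -> classI Ps -> 0 < D -> D <= 1 ->
  (exists Q, valid_mech Ps D Q /\ eps_DP Q = eps_DP_star Ps D) /\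
  eps_DP_star Ps D = eps_star_formula M D.
Proof.
move=> M2 hP D0 D1.
have [Q [e [hV [e0 [DP he]]]]] := exists_optimal_mech M2 hP D0 D1.
have lb Q' : valid_mech Ps D Q' -> (e%:E <= eps_DP Q')%E.
  by rewrite -he; exact: eps_star_formula_le_eps_DP.
have eQ : eps_DP Q = e%:E.
  apply/le_anti/andP; split; last exact: lb.
  by apply: ereal_inf_lbound; exists e.
have eS : eps_DP_star Ps D = e%:E.
  apply/le_anti/andP; split.
    by rewrite -eQ; apply: ereal_inf_lbound; exists Q.
  by apply: le_ereal_inf_tmp => _ [Q' hQ' <-]; exact: lb.
split; last by rewrite eS he.
by exists Q; split; [exact: hV | rewrite eQ eS].
Qed.
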